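(* Let $n \ge 2$ and let $C = (w_1, w_2, \dots, w_{2^n}, w_1)$ be a Hamiltonian cycle of the $n$-dimensional hypercube on vertex set $\{0,1\}^n$ (i.e. a cyclic Gray code: the $w_k$ are pairwise distinct, and consecutive words $w_k, w_{k+1}$, as well as $w_{2^n}, w_1$, differ in exactly one bit position). Let $f_C:\{0,1\}^n\to\{0,1\}^n$ be the Boolean map defined componentwise by $(f_C)_i(x) = x_i$ if the arc from $x$ to $x$ with bit $i$ flipped is one of the arcs $w_k\to w_{k+1}$ ($1\le k<2^n$) or $w_{2^n}\to w_1$ of $C$, and $(f_C)_i(x) = \overline{x_i}$ otherwise; thus $\Gamma(f_C)$ is the directed $n$-cube with the arcs of $C$ removed (and loops added). Then the iteration graph $\Gamma(f_C)$ is strongly connected.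
   Context: The directed $n$-cube has vertex set $\{0,1\}^n$ and an arc from $x$ to $y$ whenever $x$ and $y$ differ in exactly one bit (in both directions). For a Boolean map $f=(f_1,\dots,f_n):\{0,1\}^n\to\{0,1\}^n$, define $F_f(i,x) = (x_1,\dots,x_{i-1},f_i(x),x_{i+1},\dots,x_n)$ for $i\in\{1,\dots,n\}$. The iteration graph $\Gamma(f)$ is the directed graph with vertex set $\{0,1\}^n$ containing, for every $x$ and every $i$, an arc from $x$ to $F_f(i,x)$. A directed graph is strongly connected if every vertex can be reached from every other vertex by a directed path. *)

From mathcomp Require Import all_boot.
Set Implicit Arguments. Unset Strict Implicit. Unset Printing Implicit Defensive.

(* Vertices of the n-cube: words x = (x_0,...,x_{n-1}) in {0,1}^n,
   bits indexed by 'I_n (0-based instead of 1-based). *)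
Definition word (n : nat) := {ffun 'I_n -> bool}.

Definition flip n (x : word n) (i : 'I_n) : word n :=
  [ffun j => if j == i then ~~ x j else x j].

Definition differ_one n (x y : word n) : bool :=
  #|[set i | x i != y i]| == 1.

Definition Fupd n (f : word n -> word n) (i : 'I_n) (x : word n) : word n :=
  [ffun j => if j == i then f x i else x j].

Definition Gamma n (f : word n -> word n) : rel (word n) :=
  fun x y => [exists i, y == Fupd f i x].

Definition strongly_connected (T : finType) (e : rel T) : Prop :=
  forall x y : T, connect e x y.

(* w : 'I_(2^n) -> word n (w_1,...,w_{2^n} indexed from 0) is a Hamiltonian
   cycle of the n-cube: pairwise distinct, and w_k, w_{k+1 mod 2^n} differ
   in exactly one bit. *)
Definition gray_cycle n (w : 'I_(2 ^ n) -> word n) : Prop :=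
  injective w /\ forall k : 'I_(2 ^ n), differ_one (w k) (w (ordS k)).

Definition cycle_arc n (w : 'I_(2 ^ n) -> word n) (x : word n) (i : 'I_n) : bool :=
  [exists k : 'I_(2 ^ n), (w k == x) && (w (ordS k) == flip x i)].

Definition fC n (w : 'I_(2 ^ n) -> word n) (x : word n) : word n :=
  [ffun i => if cycle_arc w x i then x i else ~~ x i].

(* Removing the arcs of the Hamiltonian cycle C keeps every reversed arc
   w_{k+1} -> w_k: since n >= 2 the cycle has length 2^n > 2, so w_{k+1} -> w_k
   is not itself an arc of C.  Walking C backwards along these arcs reaches
   every vertex from every other one. *)
From mathcomp Require Import all_boot.

Set Implicit Arguments.
Unset Strict Implicit.
Unset Printing Implicit Defensive.

Lemma flipK n (x : word n) (i : 'I_n) : flip (flip x i) i = x.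
Proof.
by apply/ffunP => j; rewrite !ffunE; case: eqP => // _; rewrite negbK.
Qed.

Lemma differ_one_flip n (x y : word n) : differ_one x y -> exists i, y = flip x i.
Proof.
move=> /cards1P [i Di]; exists i; apply/ffunP => j; rewrite ffunE.
have /setP/(_ j) := Di; rewrite !inE.
by case: (j == i); case: (x j); case: (y j).
Qed.

Lemma Fupd_fC_flip n (w : 'I_(2 ^ n) -> word n) (x : word n) (i : 'I_n) :
  ~~ cycle_arc w x i -> Fupd (fC w) i x = flip x i.
Proof.
by move=> /negbTE notC; apply/ffunP => j; rewrite !ffunE notC; case: eqP => [->|].
Qed.

Lemma val_iter_ordS m (k : 'I_m) j : val (iter j (@ordS m) k) = (k + j) %% m.
Proof.
elim: j => [|j IHj] /=; first by rewrite addn0 modn_small.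
by rewrite IHj /= -addn1 modnDml -addnA addn1.
Qed.

Lemma ordS_ordS_neq m (k : 'I_m) : 2 < m -> ordS (ordS k) != k.
Proof.
move=> m_gt2; apply/eqP => /(congr1 val); rewrite -[ordS _]/(iter 2 _ k).
rewrite val_iter_ordS /= => /eqP.
rewrite -[X in _ == X](modn_small (ltn_ord k)) -[X in _ == X %% _]addn0.
by rewrite eqn_modDl mod0n modn_small.
Qed.

Lemma iter_ordS_onto m (k l : 'I_m) : exists j, iter j (@ordS m) k = l.
Proof.
exists (l + (m - k)); apply: val_inj; rewrite val_iter_ordS addnCA.
by rewrite subnKC 1?ltnW // modnDr modn_small.
Qed.

Section GrayCycle.

Variables (n : nat) (w : 'I_(2 ^ n) -> word n).
Hypothesis w_gray : gray_cycle w.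
Hypothesis n_gt1 : 1 < n.

Lemma gray_cycle_onto (x : word n) : exists k, x = w k.
Proof.
have : x \in codom w.
  by apply: inj_card_onto; [case: w_gray | rewrite card_ffun card_bool !card_ord].
by case/codomP => k ->; exists k.
Qed.

Lemma Gamma_fC_cycle_rev (k : 'I_(2 ^ n)) : Gamma (fC w) (w (ordS k)) (w k).
Proof.
case: w_gray => w_inj w_diff.
have [i wSk] := differ_one_flip (w_diff k).
have wk : w k = flip (w (ordS k)) i by rewrite wSk flipK.
have notC : ~~ cycle_arc w (w (ordS k)) i.
  apply/existsP => -[j /andP [/eqP /w_inj ->]].
  rewrite -wk => /eqP /w_inj /eqP; apply/negP/ordS_ordS_neq.
  by apply: (@leq_trans (2 ^ 2)); rewrite ?leq_exp2l.
by apply/existsP; exists i; rewrite Fupd_fC_flip // wk.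
Qed.

Lemma connect_cycle_rev j (k : 'I_(2 ^ n)) :
  connect (Gamma (fC w)) (w (iter j (@ordS _) k)) (w k).
Proof.
elim: j => [|j IHj] /=; first exact: connect0.
exact: connect_trans (connect1 (Gamma_fC_cycle_rev _)) IHj.
Qed.

End GrayCycle.

Theorem theorem2 (n : nat) (hn : 2 <= n) (w : 'I_(2 ^ n) -> word n) :
  gray_cycle w -> strongly_connected (Gamma (fC w)).
Proof.
move=> w_gray x y.
have [k ->] := gray_cycle_onto w_gray y.
have [l ->] := gray_cycle_onto w_gray x.
have [j <-] := iter_ordS_onto k l.
exact: connect_cycle_rev.
Qed.
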